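(* For every density matrix $\sigma''$ on $\mathcal{H}$ with largest eigenvalue $\alpha$, $$d(\sigma'')\ge \alpha^{-1}\big(1+R_g(\sigma'')\big).$$
   Context: $\mathcal{H}=\mathcal{H}_1\otimes\cdots\otimes\mathcal{H}_m$ is finite-dimensional. A positive semidefinite operator is separable if it is a nonnegative combination of tensor products of positive semidefinite operators on the $\mathcal{H}_k$; $\mathfrak{S}$ is the set of separable density matrices. For a density matrix $\sigma$, $d(\sigma):=\min \mathrm{Tr}(\Pi)/\mathrm{Tr}(\sigma\Pi)$ over separable positive semidefinite operators $\Pi$ with $\mathrm{Tr}(\sigma\Pi)>0$ and $0\le \Pi/\mathrm{Tr}(\sigma\Pi)\le I$. Global robustness: $R_g(\sigma)=\min\{t\ge0:\exists$ a density matrix $\varrho$ with $(\sigma+t\varrho)/(1+t)\in\mathfrak{S}\}$. *)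

(* Operators on a finite-dimensional Hilbert space with an
   orthonormal basis indexed by a finType T are represented by their matrices
   T -> T -> C, over an arbitrary numClosedFieldType C (e.g. the complex numbers). *)
From HB Require Import structures.
From mathcomp Require Import all_boot all_order all_algebra.
Set Implicit Arguments. Unset Strict Implicit. Unset Printing Implicit Defensive.
Import Order.TTheory GRing.Theory Num.Theory.
Local Open Scope ring_scope.

Section Ops.
Variable C : numClosedFieldType.

Definition op (T : finType) := T -> T -> C.

Definition tr (T : finType) (A : op T) : C := \sum_(i : T) A i i.

Definition opmul (T : finType) (A B : op T) : op T :=
  fun i j => \sum_(k : T) A i k * B k j.

Definition opscale (T : finType) (a : C) (A : op T) : op T := fun i j => a * A i j.

Definition opid (T : finType) : op T := fun i j => if i == j then 1 else 0.

Definition opsub (T : finType) (A B : op T) : op T := fun i j => A i j - B i j.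

(* positive semidefinite: <v, A v> >= 0 for every vector v
   (in a numClosedFieldType, 0 <= z means z is real and nonnegative) *)
Definition psd (T : finType) (A : op T) : Prop :=
  forall v : T -> C, 0 <= \sum_(i : T) \sum_(j : T) (v i)^* * A i j * v j.

Definition loewner_le (T : finType) (A B : op T) : Prop := psd (opsub B A).

Definition density (T : finType) (A : op T) : Prop := psd A /\ tr A = 1.

Definition eigenvalue (T : finType) (A : op T) (l : C) : Prop :=
  exists v : T -> C, (exists i, v i != 0) /\
    forall i, \sum_(j : T) A i j * v j = l * v i.

Definition largest_eigenvalue (T : finType) (A : op T) (a : C) : Prop :=
  eigenvalue A a /\ forall l, eigenvalue A l -> l <= a.

(* Multipartite space H = H_1 (x) ... (x) H_m with dim H_k = d k;
   basis indexed by tuples (x_k)_k with x_k : 'I_(d k). *)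
Definition msys (m : nat) (d : 'I_m -> nat) : finType :=
  {dffun forall k : 'I_m, 'I_(d k)}.

Definition tensor (m : nat) (d : 'I_m -> nat) (P : forall k : 'I_m, op 'I_(d k))
  : op (msys d) :=
  fun x y => \prod_(k < m) P k (x k) (y k).

Definition separable (m : nat) (d : 'I_m -> nat) (Pi : op (msys d)) : Prop :=
  exists (n : nat) (c : 'I_n -> C) (P : 'I_n -> forall k : 'I_m, op 'I_(d k)),
    (forall i, 0 <= c i) /\ (forall i k, psd (P i k)) /\
    forall x y, Pi x y = \sum_(i < n) c i * tensor (P i) x y.

Definition sep_state (m : nat) (d : 'I_m -> nat) (rho : op (msys d)) : Prop :=
  density rho /\ separable rho.

Definition d_feasible (m : nat) (d : 'I_m -> nat) (sigma Pi : op (msys d)) : Prop :=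
  separable Pi /\ psd Pi /\ 0 < tr (opmul sigma Pi) /\
  psd (opscale (tr (opmul sigma Pi))^-1 Pi) /\
  loewner_le (opscale (tr (opmul sigma Pi))^-1 Pi) (@opid (msys d)).

Definition Rg_feasible (m : nat) (d : 'I_m -> nat) (sigma : op (msys d)) (t : C) : Prop :=
  0 <= t /\ exists rho : op (msys d), density rho /\
    sep_state (fun x y => (sigma x y + t * rho x y) / (1 + t)).

Definition is_global_robustness (m : nat) (d : 'I_m -> nat) (sigma : op (msys d)) (r : C) : Prop :=
  Rg_feasible sigma r /\ forall t, Rg_feasible sigma t -> r <= t.

End Ops.

(* Let Pi be feasible for d(sigma), s := Tr(sigma Pi) and P := Pi / s, so that
   0 <= P <= I and Tr(sigma P) = 1 = Tr sigma.  The heart of the argument is the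
   Loewner inequality  sigma <= alpha P : since Tr(sigma (I - P)) = 0 with both
   factors PSD, I - P vanishes on the range of sigma, so P acts as the identity
   there, while sigma <= alpha on its range.  Consequently W := alpha P is a
   separable PSD operator dominating sigma, and any such W yields the feasible
   robustness  t = Tr W - 1  (take rho := (W - sigma)/t, so that
   (sigma + t rho)/(1 + t) = W / Tr W).  Hence R_g(sigma) <= alpha Tr(Pi)/s - 1,
   which is the claim. *)
From Pilot Require Import Defs.
From HB Require Import structures.
From mathcomp Require Import all_boot all_order all_algebra.
From mathcomp Require Import ring.
Import Order.TTheory GRing.Theory Num.Theory.
Set Implicit Arguments. Unset Strict Implicit. Unset Printing Implicit Defensive.
Local Open Scope ring_scope.

Section Form.
Variables (C : numClosedFieldType) (T : finType).
Implicit Types (A B : op C T) (x y z : T -> C).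

Definition form A x y : C := \sum_i \sum_j (x i)^* * A i j * y j.

Definition vadd x y : T -> C := fun i => x i + y i.
Definition vscale (c : C) x : T -> C := fun i => c * x i.

Lemma formDl A x y z : form A (vadd x y) z = form A x z + form A y z.
Proof.
rewrite /form -big_split /=; apply: eq_bigr => i _.
rewrite -big_split /=; apply: eq_bigr => j _; rewrite /vadd rmorphD /=; ring.
Qed.

Lemma formDr A x y z : form A x (vadd y z) = form A x y + form A x z.
Proof.
rewrite /form -big_split /=; apply: eq_bigr => i _.
rewrite -big_split /=; apply: eq_bigr => j _; rewrite /vadd; ring.
Qed.

Lemma formZl A c x y : form A (vscale c x) y = c^* * form A x y.
Proof.
rewrite /form mulr_sumr; apply: eq_bigr => i _.
rewrite mulr_sumr; apply: eq_bigr => j _; rewrite /vscale rmorphM /=; ring.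
Qed.

Lemma formZr A c x y : form A x (vscale c y) = c * form A x y.
Proof.
rewrite /form mulr_sumr; apply: eq_bigr => i _.
rewrite mulr_sumr; apply: eq_bigr => j _; rewrite /vscale; ring.
Qed.

Lemma form_sub A B x y : form (opsub A B) x y = form A x y - form B x y.
Proof.
rewrite /form -sumrB; apply: eq_bigr => i _.
rewrite -sumrB; apply: eq_bigr => j _; rewrite /opsub; ring.
Qed.

Lemma form_scale A c x y : form (opscale c A) x y = c * form A x y.
Proof.
rewrite /form mulr_sumr; apply: eq_bigr => i _.
rewrite mulr_sumr; apply: eq_bigr => j _; rewrite /opscale; ring.
Qed.

Lemma form_id x y : form (@opid C T) x y = \sum_i (x i)^* * y i.
Proof.
rewrite /form /opid; apply: eq_bigr => i _.
rewrite (bigD1 i) //= big1 ?addr0 ?eqxx ?mulr1 // => j.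
by rewrite eq_sym => /negbTE ->; rewrite mulr0 mul0r.
Qed.

Lemma form_ext A x x' y y' : x =1 x' -> y =1 y' -> form A x y = form A x' y'.
Proof.
move=> hx hy; rewrite /form; apply: eq_bigr => i _; apply: eq_bigr => j _.
by rewrite hx hy.
Qed.

Definition basis_vec (i : T) : T -> C := fun k => (i == k)%:R.

Lemma form_basis A i j : form A (basis_vec i) (basis_vec j) = A i j.
Proof.
rewrite /form (bigD1 i) //= [X in _ + X]big1 ?addr0; last first.
  move=> k hk; rewrite /basis_vec eq_sym (negbTE hk) rmorph0 /=.
  by rewrite big1 // => l _; rewrite !mul0r.
rewrite (bigD1 j) //= [X in _ + X]big1 ?addr0 /basis_vec ?eqxx ?rmorph1 ?mul1r ?mulr1 //.
by move=> k hk; rewrite eq_sym (negbTE hk) mulr0.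
Qed.

Lemma form_lin (K : finType) (u : K -> T -> C) A (a b : K -> C) :
  form A (fun t => \sum_k a k * u k t) (fun t => \sum_l b l * u l t) =
  \sum_k \sum_l (a k)^* * b l * form A (u k) (u l).
Proof.
have e i j : (\sum_k a k * u k i)^* * A i j * (\sum_l b l * u l j) =
    \sum_k \sum_l (a k)^* * b l * ((u k i)^* * A i j * u l j).
  rewrite rmorph_sum /= big_distrl /= big_distrl /=.
  apply: eq_bigr => k _; rewrite big_distrr /=; apply: eq_bigr => l _.
  rewrite rmorphM /=; ring.
rewrite /form; under eq_bigr do under eq_bigr do rewrite e.
under eq_bigr do rewrite exchange_big /=.
rewrite exchange_big /=; apply: eq_bigr => k _.
under eq_bigr do rewrite exchange_big /=.
rewrite exchange_big /=; apply: eq_bigr => l _.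
by rewrite mulr_sumr; apply: eq_bigr => i _; rewrite mulr_sumr.
Qed.

(* A PSD operator is hermitian: polarize with x + y and x + i y. *)
Lemma psd_herm A x y : psd A -> form A y x = (form A x y)^*.
Proof.
move=> hA.
have real v : (form A v v)^* = form A v v by apply: geC0_conj; apply: hA.
have real_part (u w : C) : u^* = u -> (u + w)^* = u + w -> w^* = w.
  by move=> hu; rewrite rmorphD /= hu => /addrI.
set a := form A x y; set b := form A y x; set n := form A x x + form A y y.
have hn : n^* = n by rewrite rmorphD /= !real.
have ii : 'i * 'i = -1 :> C by rewrite -expr2 sqrCi.
have E1 : form A (vadd x y) (vadd x y) = n + (a + b).
  by rewrite formDl !formDr -/a -/b /n; ring.
have E2 : form A (vadd x (vscale 'i y)) (vadd x (vscale 'i y)) = n + ('i * a - 'i * b).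
  rewrite formDl !formDr !formZl !formZr -/a -/b conjCi /n.
  have -> : - 'i * ('i * form A y y) = form A y y by rewrite mulrA mulNr ii opprK mul1r.
  ring.
have e1 : (a + b)^* = a + b by apply: (real_part n _ hn); rewrite -E1 real.
have e2 : ('i * a - 'i * b)^* = 'i * a - 'i * b.
  by apply: (real_part n _ hn); rewrite -E2 real.
rewrite rmorphD /= in e1; rewrite rmorphB !rmorphM /= conjCi in e2.
have e3 : b^* - a^* = a - b by apply: (mulfI (neq0Ci C)); rewrite [RHS]mulrBr -e2; ring.
have e4 : b^* *+ 2 = a *+ 2.
  have -> : b^* *+ 2 = (a^* + b^*) + (b^* - a^*) by ring.
  by rewrite e1 e3; ring.
have : b^* = a by apply/eqP; rewrite -(eqr_pMn2r (isT : (0 < 2)%N)) e4.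
by move=> <-; rewrite conjCK.
Qed.

Lemma psd_kernel A x y : psd A -> form A x x = 0 -> form A x y = 0.
Proof.
move=> hA hx.
set c := form A x y; set q := form A y y.
have hq : 0 <= q by apply: hA.
have hyx : form A y x = c^* by rewrite psd_herm.
have hq1 : (q + 1)^* = q + 1 by rewrite rmorphD /= (geC0_conj hq) rmorph1.
have := hA (vadd (vscale (q + 1) x) (vscale (- c^*) y)).
rewrite -/(form _ _ _) !formDl !formDr !formZl !formZr hx hyx -/c -/q hq1 rmorphN /= conjCK.
have -> : (q + 1) * ((q + 1) * 0) + (q + 1) * (- c^* * c) +
   (- c * ((q + 1) * c^*) + - c * (- c^* * q)) = - ((c * c^*) * (q + 2)) by ring.
rewrite oppr_ge0 => hle.
have hge : 0 <= (c * c^*) * (q + 2) by rewrite mulr_ge0 ?mul_conjC_ge0 // addr_ge0.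
have : (c * c^*) * (q + 2) == 0 by rewrite eq_le hle hge.
rewrite mulf_eq0 mul_conjC_eq0 => /orP[/eqP //|].
by rewrite gt_eqF // ltr_wpDl.
Qed.

Lemma psd_kernel_r A x y : psd A -> form A x x = 0 -> form A y x = 0.
Proof. by move=> hA hx; rewrite psd_herm // psd_kernel // rmorph0. Qed.

Lemma psd_diag_ge0 A i : psd A -> 0 <= A i i.
Proof. by rewrite -form_basis; apply. Qed.

Lemma psd_ext A B : (forall i j, A i j = B i j) -> psd A -> psd B.
Proof.
move=> hAB hA v; have /= := hA v.
by under eq_bigr do under eq_bigr do rewrite hAB.
Qed.

Lemma psd_scale A c : 0 <= c -> psd A -> psd (opscale c A).
Proof. by move=> hc hA v; rewrite -/(form _ _ _) form_scale mulr_ge0 //; apply: hA. Qed.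

Lemma tr_psd_ge0 A : psd A -> 0 <= tr A.
Proof. by move=> hA; apply: sumr_ge0 => i _; apply: psd_diag_ge0. Qed.

Lemma psd_tr0 A : psd A -> tr A = 0 -> forall i j, A i j = 0.
Proof.
move=> hA h0 i j.
have hd k : A k k = 0.
  by apply: (psumr_eq0P (P := predT) _ h0) => // l _; apply: psd_diag_ge0.
by rewrite -form_basis psd_kernel // form_basis hd.
Qed.

Lemma tr_scale A c : tr (opscale c A) = c * tr A.
Proof. by rewrite /tr /opscale mulr_sumr. Qed.

Lemma tr_sub A B : tr (opsub A B) = tr A - tr B.
Proof. by rewrite /tr /opsub sumrB. Qed.

Lemma tr_opmul_scale A B c : tr (opmul A (opscale c B)) = c * tr (opmul A B).
Proof.
rewrite /tr /opmul /opscale mulr_sumr; apply: eq_bigr => i _.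
by rewrite mulr_sumr; apply: eq_bigr => j _; ring.
Qed.

Lemma tr_opmul_id A : tr (opmul A (@opid C T)) = tr A.
Proof.
apply: eq_bigr => i _; rewrite /opmul (bigD1 i) //= /opid eqxx mulr1 big1 ?addr0 //.
by move=> j /negbTE ->; rewrite mulr0.
Qed.

Lemma sum_delta (K : finType) (F : K -> C) k : \sum_l F l * (k == l)%:R = F k.
Proof.
rewrite (bigD1 k) //= eqxx mulr1 big1 ?addr0 // => l hl.
by rewrite eq_sym (negbTE hl) mulr0.
Qed.

Lemma sum_enum_rank (F : 'I_#|T| -> C) :
  \sum_(t : T) F (enum_rank t) = \sum_(i < #|T|) F i.
Proof.
rewrite [LHS](reindex (@enum_val T T)) /=; last by apply: onW_bij; exact: enum_val_bij.
by apply: eq_bigr => i _; rewrite enum_valK.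
Qed.

(* Spectral theorem for PSD operators: an orthonormal basis u of eigenvectors,
   obtained from the spectral theorem for normal matrices. *)
Local Open Scope sesquilinear_scope.
Lemma psd_eigenbasis A : psd A ->
  exists (u : 'I_#|T| -> T -> C) (p : 'I_#|T| -> C),
  [/\ forall k l, \sum_t (u k t)^* * u l t = (k == l)%:R,
      forall s t, \sum_k u k s * (u k t)^* = (s == t)%:R &
      forall k s, \sum_t A s t * u k t = p k * u k s].
Proof.
move=> hA.
pose M : 'M[C]_#|T| := \matrix_(i, j) A (enum_val i) (enum_val j).
have Mh : M ^t* = M.
  by apply/matrixP => i j; rewrite !mxE -!form_basis psd_herm // conjCK.
have /orthomx_spectralP : M \is normalmx by apply/normalmxP; rewrite Mh.
set P := spectralmx M; set sp := spectral_diag M => HM.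
have PU : P \is unitarymx by apply: spectral_unitarymx.
have h1 : P *m P^t* = 1%:M by apply/unitarymxP.
have h2 : P^t* *m P = 1%:M.
  by move: PU; rewrite -trmxC_unitary => /unitarymxP; rewrite trmxCK.
have h3 : M *m P^t* = P^t* *m diag_mx sp.
  by rewrite [in LHS]HM mulmxtVK // invmx_unitary.
exists (fun k t => (P k (enum_rank t))^*), (fun k => sp 0 k); split.
- move=> k l; move/matrixP: h1 => /(_ k l); rewrite !mxE => <-.
  rewrite -(sum_enum_rank (fun j => P k j * (P^t* j l))).
  by apply: eq_bigr => t _; rewrite conjCK !mxE.
- move=> s t; move/matrixP: h2 => /(_ (enum_rank s) (enum_rank t)).
  rewrite !mxE (inj_eq enum_rank_inj) => <-.
  by apply: eq_bigr => k _; rewrite conjCK !mxE.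
- move=> k s; move/matrixP: h3 => /(_ (enum_rank s) k).
  rewrite mul_mx_diag !mxE => h; rewrite mulrC -h.
  rewrite -(sum_enum_rank (fun j => M (enum_rank s) j * (P^t*) j k)) /=.
  by apply: eq_bigr => t _; rewrite !mxE !enum_rankK.
Qed.
Local Close Scope sesquilinear_scope.

Section Eigenbasis.
Variables (K : finType) (S : op C T) (u : K -> T -> C) (p : K -> C).
Hypothesis orth : forall k l, \sum_t (u k t)^* * u l t = (k == l)%:R.
Hypothesis compl : forall s t, \sum_k u k s * (u k t)^* = (s == t)%:R.
Hypothesis eig : forall k s, \sum_t S s t * u k t = p k * u k s.

Definition coord x k : C := \sum_t (u k t)^* * x t.

Lemma expand x t : x t = \sum_k coord x k * u k t.
Proof.
rewrite /coord; under eq_bigr do rewrite big_distrl /=.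
rewrite exchange_big /=.
have -> : \sum_j \sum_i (u i j)^* * x j * u i t = \sum_j x j * (t == j)%:R.
  by apply: eq_bigr => j _; rewrite -compl mulr_sumr; apply: eq_bigr => i _; ring.
by rewrite sum_delta.
Qed.

Lemma form_eig k l : form S (u k) (u l) = p l * (k == l)%:R.
Proof.
rewrite /form -orth mulr_sumr; apply: eq_bigr => i _.
under eq_bigr do rewrite -mulrA.
by rewrite -mulr_sumr eig; ring.
Qed.

Lemma form_id_eig k l : form (@opid C T) (u k) (u l) = (k == l)%:R.
Proof. by rewrite form_id orth. Qed.

Lemma form_id_coords (c : K -> C) :
  form (@opid C T) (fun t => \sum_k c k * u k t) (fun t => \sum_k c k * u k t)
  = \sum_k (c k)^* * c k.
Proof.
rewrite form_lin; apply: eq_bigr => k _; under eq_bigr do rewrite form_id_eig.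
by rewrite (sum_delta (fun l => (c k)^* * c l)).
Qed.

Lemma form_eig_coords x : form S x x = \sum_k p k * ((coord x k)^* * coord x k).
Proof.
rewrite (form_ext S (expand x) (expand x)) form_lin; apply: eq_bigr => k _.
under eq_bigr do rewrite form_eig mulrA.
by rewrite (sum_delta (fun l => (coord x k)^* * coord x l * p l)) mulrC.
Qed.

Lemma entry_eig i j : S i j = \sum_k p k * u k i * (u k j)^*.
Proof.
rewrite -[LHS](sum_delta (fun t => S i t) j).
under eq_bigr do rewrite eq_sym -compl mulr_sumr.
rewrite exchange_big /=; apply: eq_bigr => k _.
by under eq_bigr do rewrite mulrA; rewrite -big_distrl /= eig.
Qed.

Lemma tr_eig X : tr (opmul S X) = \sum_k p k * form X (u k) (u k).
Proof.
rewrite /tr /opmul /form.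
under eq_bigr do under eq_bigr do rewrite entry_eig big_distrl /=.
under eq_bigr do rewrite exchange_big /=.
rewrite exchange_big /=; apply: eq_bigr => k _.
rewrite mulr_sumr exchange_big /=; apply: eq_bigr => j _.
by rewrite mulr_sumr; apply: eq_bigr => i _; ring.
Qed.

Lemma sum_eig : \sum_k p k = tr S.
Proof.
by rewrite -tr_opmul_id tr_eig; apply: eq_bigr => k _; rewrite form_id_eig eqxx mulr1.
Qed.

Lemma eig_ge0 k : psd S -> 0 <= p k.
Proof. by move=> /(_ (u k)); rewrite -/(form _ _ _) form_eig eqxx mulr1. Qed.

(* Defs.eigenvalue is qualified because mxalgebra also exports an eigenvalue.
   Each u k is an eigenvector, hence bounded by any bound on the eigenvalues. *)
Lemma eig_le (alpha : C) :
  (forall l, Defs.eigenvalue S l -> l <= alpha) -> forall k, p k <= alpha.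
Proof.
move=> hmax k; apply: hmax; exists (u k); split; last by move=> i; rewrite eig.
apply/existsP; apply: contraT; rewrite negb_exists => /forallP h.
have := orth k k; rewrite eqxx big1 => [/eqP|t _]; first by rewrite eq_sym oner_eq0.
by have := h t; rewrite negbK => /eqP ->; rewrite mulr0.
Qed.

Lemma tr_mul_eq0_isotropic (A : op C T) k :
  psd S -> psd A -> tr (opmul S A) = 0 -> p k != 0 -> form A (u k) (u k) = 0.
Proof.
move=> hS hA trSA hk; suff /eqP : p k * form A (u k) (u k) = 0.
  by rewrite mulf_eq0 (negbTE hk) => /eqP.
apply: (psumr_eq0P (P := predT) (F := fun l => p l * form A (u l) (u l))) => //.
  by move=> l _; apply: mulr_ge0; [apply: eig_ge0 | apply: hA].
by rewrite -tr_eig.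
Qed.

(* Main estimate: if 0 <= P <= I and Tr(S P) = Tr S, then I - P vanishes on
   the eigenvectors of nonzero eigenvalue, so P is the identity on the range
   of S and S <= alpha P. *)
Lemma eig_dominated (P : op C T) (alpha : C) :
  psd S -> (forall k, p k <= alpha) -> 0 <= alpha ->
  psd P -> psd (opsub (@opid C T) P) -> tr (opmul S P) = tr S ->
  psd (opsub (opscale alpha P) S).
Proof.
move=> hS hal alpha_ge0 hP hIP trSP.
set A := opsub (@opid C T) P.
have trSA : tr (opmul S A) = 0.
  rewrite tr_eig; under eq_bigr do rewrite form_sub mulrBr.
  by rewrite sumrB -!tr_eig tr_opmul_id trSP subrr.
have kerA k : p k != 0 -> form A (u k) (u k) = 0 by apply: tr_mul_eq0_isotropic.
move=> v; rewrite -/(form _ _ _) form_sub form_scale.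
set a := coord v.
pose b k := if p k == 0 then a k else 0.
pose w t := \sum_k b k * u k t.
have hv : v =1 (fun t => \sum_k a k * u k t) by move=> t; rewrite expand.
(* only the components of v in the kernel of S see I - P *)
have formA : form A v v = form A w w.
  rewrite (form_ext A hv hv) !form_lin.
  apply: eq_bigr => k _; apply: eq_bigr => l _.
  rewrite /b; case: (eqVneq (p k) 0) => hk; last by rewrite psd_kernel ?kerA ?mulr0.
  by case: (eqVneq (p l) 0) => hl //; rewrite psd_kernel_r ?kerA ?mulr0.
have formP x : form P x x = form (@opid C T) x x - form A x x.
  by rewrite /A form_sub opprB addrC subrK.
have formAw : form A w w <= form (@opid C T) w w.
  by rewrite -subr_ge0 -formP; apply: hP.
apply: (@le_trans _ _ (alpha * (form (@opid C T) v v - form (@opid C T) w w) - form S v v)).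
  rewrite (form_ext _ hv hv) !form_id_coords form_eig_coords -/a.
  rewrite -sumrB mulr_sumr -sumrB; apply: sumr_ge0 => k _.
  rewrite /b; case: (eqVneq (p k) 0) => hk; first by rewrite hk subrr mulr0 mul0r subrr.
  rewrite rmorph0 mulr0 subr0 -mulrBl mulr_ge0 ?subr_ge0 //.
  by rewrite mulrC mul_conjC_ge0.
by rewrite formP formA lerD2r ler_wpM2l // lerD2l lerN2.
Qed.

End Eigenbasis.

Lemma eigenvalue_bound_gt0 (S : op C T) (alpha : C) :
  density S -> (forall l, Defs.eigenvalue S l -> l <= alpha) -> 0 < alpha.
Proof.
move=> [hS trS] hmax.
have [u [p [orth compl eig]]] := psd_eigenbasis hS.
have [k hk] : exists k, p k != 0.
  apply/existsP; apply: contraT; rewrite negb_exists => /forallP h.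
  have := sum_eig orth compl eig; rewrite trS big1 => [/eqP|k _].
    by rewrite eq_sym oner_eq0.
  by apply/eqP; have := h k; rewrite negbK.
by apply: (lt_le_trans _ (eig_le orth eig hmax k)); rewrite lt_def hk (eig_ge0 orth eig k hS).
Qed.

Lemma loewner_dominated (S P : op C T) (alpha : C) :
  psd S -> (forall l, Defs.eigenvalue S l -> l <= alpha) -> 0 <= alpha ->
  psd P -> psd (opsub (@opid C T) P) -> tr (opmul S P) = tr S ->
  psd (opsub (opscale alpha P) S).
Proof.
move=> hS hmax; have [u [p [orth compl eig]]] := psd_eigenbasis hS.
exact: (eig_dominated orth compl eig hS (eig_le orth eig hmax)).
Qed.

End Form.

Section Robustness.
Variables (C : numClosedFieldType) (m : nat) (d : 'I_m -> nat).
Implicit Types (sigma W : op C (msys d)).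

Lemma separable_ext W W' :
  (forall x y, W x y = W' x y) -> separable W -> separable W'.
Proof.
move=> hW [n [c [P [hc [hP hPi]]]]].
by exists n, c, P; do 2!split=> //; move=> x y; rewrite -hW.
Qed.

Lemma separable_scale W (l : C) : 0 <= l -> separable W -> separable (opscale l W).
Proof.
move=> hl [n [c [P [hc [hP hPi]]]]].
exists n, (fun i => l * c i), P; split; first by move=> i; apply: mulr_ge0.
split=> // x y; rewrite /opscale hPi mulr_sumr; apply: eq_bigr => i _; ring.
Qed.

(* A separable PSD operator W with sigma <= W witnesses the robustness
   Tr W - 1: take rho := (W - sigma) / (Tr W - 1). *)
Lemma Rg_feasible_dominating sigma W :
  density sigma -> psd W -> separable W -> psd (opsub W sigma) ->
  Rg_feasible sigma (tr W - 1).
Proof.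
move=> [hS trS] hW sepW hB.
set B := opsub W sigma; set t := tr W - 1.
have trB : tr B = t by rewrite /B tr_sub trS.
have t_ge0 : 0 <= t by rewrite -trB tr_psd_ge0.
have trW_gt0 : 0 < tr W by rewrite -(subrK 1 (tr W)) -/t ltr_wpDl.
pose rho := if t == 0 then sigma else opscale t^-1 B.
have t_rho x y : t * rho x y = B x y.
  rewrite /rho; case: eqVneq => [h|h]; first by rewrite h mul0r psd_tr0 // trB.
  by rewrite /opscale mulrA mulfV // mul1r.
have state x y : (sigma x y + t * rho x y) / (1 + t) = opscale (tr W)^-1 W x y.
  by rewrite t_rho /B /opsub /opscale /t (addrC 1) subrK addrC subrK mulrC.
have inv_ge0 : 0 <= (tr W)^-1 by rewrite invr_ge0 ltW.
split=> //; exists rho; split.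
  rewrite /rho; case: eqVneq => h; first by split.
  by split; [apply: psd_scale; rewrite ?invr_ge0 | rewrite tr_scale trB mulVf].
split; [split|].
- exact: psd_ext (fun x y => esym (state x y)) (psd_scale inv_ge0 hW).
- rewrite /tr; under eq_bigr do rewrite state.
  by rewrite -/(tr _) tr_scale mulVf ?gt_eqF.
- exact: separable_ext (fun x y => esym (state x y)) (separable_scale inv_ge0 sepW).
Qed.

End Robustness.

Theorem mainTheorem9 (C : numClosedFieldType) (m : nat) (d : 'I_m -> nat)
  (sigma : op C (msys d)) (alpha r : C) :
  density sigma ->
  largest_eigenvalue sigma alpha ->
  is_global_robustness sigma r ->
  forall Pi : op C (msys d), d_feasible sigma Pi ->
    alpha^-1 * (1 + r) <= tr Pi / tr (opmul sigma Pi).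
Proof.
move=> hS [_ hmax] [_ rmin] Pi [sepPi [_ [s_gt0 [psdP hIP]]]].
set s := tr (opmul sigma Pi) in s_gt0 psdP hIP *.
set P := opscale s^-1 Pi in psdP hIP.
have alpha_gt0 := eigenvalue_bound_gt0 hS hmax.
have trSP : tr (opmul sigma P) = tr sigma.
  by rewrite tr_opmul_scale -/s mulVf ?gt_eqF // hS.2.
have dom := loewner_dominated hS.1 hmax (ltW alpha_gt0) psdP hIP trSP.
have sepW : separable (opscale alpha P).
  by apply/(separable_scale (ltW alpha_gt0))/separable_scale; rewrite ?invr_ge0 ?ltW.
have r_le := rmin _ (Rg_feasible_dominating hS (psd_scale (ltW alpha_gt0) psdP) sepW dom).
have -> : tr Pi / s = alpha^-1 * (1 + (tr (opscale alpha P) - 1)).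
  by rewrite addrC subrK /P !tr_scale mulKf ?gt_eqF // mulrC.
by rewrite ler_wpM2l ?invr_ge0 ?(ltW alpha_gt0) // lerD2l.
Qed.
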